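(* Let $g(q)\in\mathbb Z[q]$ and let $x_n,y_n$ ($n\ge1$) be indeterminates. Define elements $\mathsf S_n,\mathsf P_n,\mathsf I_n$ ($n\ge1$) of $\mathbb Q[q][x_d,y_d:d\ge1]$ recursively by the relations, for all $n\ge1$, $$\sum_{d|n}d\Big[\tfrac nd\Big]_{g(q)}\mathsf S_d^{\,n/d}=\sum_{d|n}d\Big[\tfrac nd\Big]_{g(q)}x_d^{\,n/d}+\sum_{d|n}d\Big[\tfrac nd\Big]_{g(q)}y_d^{\,n/d},$$ $$\sum_{d|n}d\Big[\tfrac nd\Big]_{g(q)}\mathsf P_d^{\,n/d}=(1-g(q))\Big(\sum_{d|n}d\Big[\tfrac nd\Big]_{g(q)}x_d^{\,n/d}\Big)\Big(\sum_{d|n}d\Big[\tfrac nd\Big]_{g(q)}y_d^{\,n/d}\Big),$$ $$\sum_{d|n}d\Big[\tfrac nd\Big]_{g(q)}x_d^{\,n/d}+\sum_{d|n}d\Big[\tfrac nd\Big]_{g(q)}\mathsf I_d^{\,n/d}=0.$$ Then for every $n\ge1$, $\mathsf S_n,\mathsf P_n\in\mathbb Z[g(q)][x_d,y_d:d\mid n]$ and $\mathsf I_n\in\mathbb Z[g(q)][x_d:d\mid n]$.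
   Context: For a polynomial $g(q)\in\mathbb Z[q]$ and a positive integer $n$, $[n]_{g(q)}:=1+g(q)+g(q)^2+\cdots+g(q)^{n-1}$. $\mathbb Z[g(q)]$ denotes the subring of $\mathbb Z[q]$ generated by $g(q)$. (The recursions determine $\mathsf S_n,\mathsf P_n,\mathsf I_n$ uniquely since the term with $d=n$ has coefficient $n$.) *)

From HB Require Import structures.
From mathcomp Require Import all_boot all_order all_algebra.
From mathcomp Require Import mpoly.
Set Implicit Arguments. Unset Strict Implicit. Unset Printing Implicit Defensive.
Import Order.TTheory GRing.Theory Num.Theory.
Local Open Scope ring_scope.

(* Truncation of Q[q][x_d, y_d : d >= 1] to the variables with d <= N:
   the polynomial ring over Q[q] = {poly rat} in N.*2.+2 indeterminates,
   x_d is indeterminate number 2d and y_d is indeterminate number 2d+1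
   (indeterminates 0 and 1 are unused). *)
Definition Ring (N : nat) := {mpoly {poly rat}[N.*2.+2]}.

Definition xv (N d : nat) : Ring N := 'X_(inord (d.*2)).
Definition yv (N d : nat) : Ring N := 'X_(inord (d.*2.+1)).

Definition gR (N : nat) (g : {poly int}) : Ring N :=
  (map_poly (fun z : int => z%:~R : rat) g)%:MP.

Definition qnum (N : nat) (h : Ring N) (m : nat) : Ring N :=
  \sum_(i < m) h ^+ i.

Definition ghost (N : nat) (h : Ring N) (a : nat -> Ring N) (n : nat) : Ring N :=
  \sum_(d <- divisors n) (d%:R * qnum h (n %/ d) * a d ^+ (n %/ d)).

Inductive in_subring (R : pzRingType) (G : R -> Prop) : R -> Prop :=
  | sub_gen r : G r -> in_subring G r
  | sub_one : in_subring G 1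
  | sub_add r s : in_subring G r -> in_subring G s -> in_subring G (r + s)
  | sub_opp r : in_subring G r -> in_subring G (- r)
  | sub_mul r s : in_subring G r -> in_subring G s -> in_subring G (r * s).

(* Dwork's lemma. In the universal ring [Q[h, x_d, y_d]] with the Frobenius
   lifts [psi_p : v |-> v^p] on the variables, a sequence [c] with values in
   [B = Z[h, x_d, y_d]] is the ghost sequence [n |-> sum_(d | n) d [n/d]_h a_d^(n/d)]
   of a sequence [a] with values in [B] as soon as
   [c_n = [p]_h psi_p(c_(n/p)) mod p^(v_p n) B] for all primes [p | n]: the ghost
   sum at [n] is [n a_n] plus known terms, and divisibility by [n] is checked one
   prime power at a time. Ghost sums satisfy these congruences, since
   [psi_p b = b^p mod p] and [[p t]_h = [p]_h [t]_(h^p)]; so do the right-hand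
   sides of the three recursions, using [psi_p (1 - h) = (1 - h) [p]_h] for the
   product. Specializing [h] to [g(q)] and [x_d, y_d] ([d | n]) to themselves,
   uniqueness of ghost components over the domain [Q[q][x, y]] identifies
   [S_n], [P_n], [I_n] with images of elements of [B]. *)

From Pilot Require Import Defs.
From HB Require Import structures.
From mathcomp Require Import all_boot all_order all_algebra.
From mathcomp Require Import mpoly.
From mathcomp Require Import ring zify.
Import Order.TTheory GRing.Theory Num.Theory.
Set Implicit Arguments. Unset Strict Implicit. Unset Printing Implicit Defensive.
Local Open Scope ring_scope.

Section Subring.
Variables (R : pzRingType) (G : R -> Prop).

Lemma in_subring0 : in_subring G 0.
Proof. by rewrite -(subrr 1); apply: sub_add; [|apply: sub_opp]; exact: sub_one. Qed.

Lemma in_subringB r s : in_subring G r -> in_subring G s -> in_subring G (r - s).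
Proof. by move=> hr hs; apply: sub_add => //; exact: sub_opp. Qed.

Lemma in_subringX r k : in_subring G r -> in_subring G (r ^+ k).
Proof.
move=> hr; elim: k => [|k IH]; first by rewrite expr0; exact: sub_one.
by rewrite exprS; exact: sub_mul.
Qed.

Lemma in_subring_nat k : in_subring G k%:R.
Proof.
elim: k => [|k IH]; first exact: in_subring0.
by rewrite -addn1 natrD; apply: sub_add => //; exact: sub_one.
Qed.

Lemma in_subring_int (z : int) : in_subring G z%:~R.
Proof.
case: z => k; first exact: in_subring_nat.
by rewrite NegzE mulrNz; apply: sub_opp; exact: in_subring_nat.
Qed.

Lemma in_subring_sum (I : Type) (s : seq I) (P : pred I) (F : I -> R) :
  (forall i, P i -> in_subring G (F i)) -> in_subring G (\sum_(i <- s | P i) F i).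
Proof.
by move=> H; apply: (big_ind (in_subring G)) => //; [exact: in_subring0|exact: sub_add].
Qed.

End Subring.

Lemma in_subring_rmorph (A B : pzRingType) (GA : A -> Prop) (GB : B -> Prop)
    (f : {rmorphism A -> B}) :
  (forall r, GA r -> in_subring GB (f r)) ->
  forall b, in_subring GA b -> in_subring GB (f b).
Proof.
move=> H b; elim=> {b} [r /H //||r s _ hr _ hs|r _ hr|r s _ hr _ hs].
- by rewrite rmorph1; exact: sub_one.
- by rewrite rmorphD; exact: sub_add.
- by rewrite rmorphN; exact: sub_opp.
- by rewrite rmorphM; exact: sub_mul.
Qed.

Definition in_nideal (R : pzRingType) (G : R -> Prop) (m : nat) (z : R) :=
  exists2 b, in_subring G b & z = m%:R * b.

Section NatIdeal.
Variables (R : comPzRingType) (G : R -> Prop).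
Implicit Types (z w : R) (m : nat).

Lemma nideal0 m : in_nideal G m 0.
Proof. by exists 0; [exact: in_subring0 | rewrite mulr0]. Qed.

Lemma nidealD m z w : in_nideal G m z -> in_nideal G m w -> in_nideal G m (z + w).
Proof. by move=> [b hb ->] [c hc ->]; exists (b + c); [exact: sub_add | rewrite mulrDr]. Qed.

Lemma nidealN m z : in_nideal G m z -> in_nideal G m (- z).
Proof. by move=> [b hb ->]; exists (- b); [exact: sub_opp | rewrite mulrN]. Qed.

Lemma nidealB m z w : in_nideal G m z -> in_nideal G m w -> in_nideal G m (z - w).
Proof. by move=> hz hw; apply: nidealD => //; exact: nidealN. Qed.

Lemma nidealMr m z w : in_nideal G m z -> in_subring G w -> in_nideal G m (z * w).
Proof. by move=> [b hb ->] hw; exists (b * w); [exact: sub_mul | rewrite mulrA]. Qed.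

Lemma nidealMl m z w : in_subring G w -> in_nideal G m z -> in_nideal G m (w * z).
Proof. by move=> hw hz; rewrite mulrC; exact: nidealMr. Qed.

Lemma nidealMM m1 m2 z w :
  in_nideal G m1 z -> in_nideal G m2 w -> in_nideal G (m1 * m2) (z * w).
Proof.
move=> [b hb ->] [c hc ->]; exists (b * c); first exact: sub_mul.
by rewrite natrM mulrACA.
Qed.

Lemma nideal_natl m1 m2 z : in_nideal G m2 z -> in_nideal G (m1 * m2) (m1%:R * z).
Proof. by move=> [b hb ->]; exists b => //; rewrite natrM mulrA. Qed.

Lemma nideal_dvd m1 m2 z : (m1 %| m2)%N -> in_nideal G m2 z -> in_nideal G m1 z.
Proof.
move=> /dvdnP[t ->] [b hb ->]; exists (t%:R * b).
  by apply: sub_mul => //; exact: in_subring_nat.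
by rewrite natrM -mulrA mulrCA.
Qed.

Lemma nideal_natmul m k z : (m %| k)%N -> in_subring G z -> in_nideal G m (z *+ k).
Proof. by move=> mk hz; apply: nideal_dvd mk _; exists z => //; rewrite mulr_natl. Qed.

Lemma nideal_sum m (I : Type) (s : seq I) (P : pred I) (F : I -> R) :
  (forall i, P i -> in_nideal G m (F i)) -> in_nideal G m (\sum_(i <- s | P i) F i).
Proof. by move=> H; apply: (big_ind (in_nideal G m)) => //; [exact: nideal0|exact: nidealD]. Qed.

Lemma nideal_coprime m1 m2 z : coprime m1 m2 ->
  in_nideal G m1 z -> in_nideal G m2 z -> in_nideal G (m1 * m2) z.
Proof.
move=> co [b hb eb] [c hc ec]; have [u [v euv]] := Bezoutz m1 m2.
have e1 : (u * m1%:Z + v * m2%:Z)%:~R = 1 :> R by rewrite euv /gcdz /= (eqP co).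
rewrite intrD !intrM -!pmulrn in e1.
exists (u%:~R * c + v%:~R * b).
  by apply: sub_add; apply: sub_mul => //; exact: in_subring_int.
by rewrite -[z]mul1r -{1}e1 mulrDl {1}ec eb natrM; ring.
Qed.

Lemma nideal_pfactors n z : (0 < n)%N -> in_subring G z ->
  (forall p, prime p -> (p %| n)%N -> in_nideal G (p ^ logn p n) z) -> in_nideal G n z.
Proof.
elim/ltn_ind: n => n IH n_gt0 hz H.
have [n_le1|n_gt1] := leqP n 1.
  have -> : n = 1%N by lia.
  by exists z; rewrite // mul1r.
have p_pr := pdiv_prime n_gt1; have p_dvd := pdiv_dvd n.
set p := pdiv n in p_pr p_dvd.
have [m co_pm en] := pfactor_coprime p_pr n_gt0.
have m_gt0 : (0 < m)%N by move: n_gt0; rewrite en muln_gt0 => /andP[].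
have lt_mn : (m < n)%N.
  rewrite [X in (_ < X)%N]en ltn_Pmulr // -(expn0 p) ltn_exp2l ?prime_gt1 //.
  by rewrite logn_gt0 mem_primes p_pr n_gt0 p_dvd.
rewrite en; apply: nideal_coprime; last exact: H.
  by rewrite coprime_sym coprimeXl.
apply: IH => // r r_pr r_dvd_m.
have r_ne_p : r != p.
  by apply: contraTneq r_dvd_m => ->; rewrite -prime_coprime // coprime_sym.
have -> : logn r m = logn r n.
  rewrite en lognM // ?expn_gt0 ?prime_gt0 // lognX (logn_prime r p_pr).
  by rewrite (negbTE r_ne_p) muln0 addn0.
by apply: H => //; rewrite en dvdn_mulr.
Qed.

Lemma nidealXX m x y t : in_subring G x -> in_subring G y ->
  in_nideal G m (x - y) -> in_nideal G m (x ^+ t - y ^+ t).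
Proof.
move=> hx hy hxy; rewrite subrXX; apply: nidealMr => //.
by apply: in_subring_sum => i _; apply: sub_mul; exact: in_subringX.
Qed.

Lemma nidealXpX p j x y : (0 < p)%N -> (0 < j)%N -> in_subring G x -> in_subring G y ->
  in_nideal G (p ^ j) (x - y) -> in_nideal G (p ^ j.+1) (x ^+ p - y ^+ p).
Proof.
move=> p_gt0 j_gt0 hx hy hxy; rewrite subrXX expnSr; apply: nidealMM => //.
set c := y ^+ p.-1.
have -> : \sum_(i < p) x ^+ (p.-1 - i) * y ^+ i
          = \sum_(i < p) (x ^+ (p.-1 - i) * y ^+ i - c) + c *+ p.
  by rewrite sumrB sumr_const card_ord subrK.
apply: nidealD; last by apply: nideal_natmul => //; exact: in_subringX.
apply: nideal_sum => i _.
have -> : x ^+ (p.-1 - i) * y ^+ i - c = (x ^+ (p.-1 - i) - y ^+ (p.-1 - i)) * y ^+ i.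
  by rewrite mulrBl -exprD subnK // -ltnS prednK.
apply: nidealMr; last exact: in_subringX.
apply: nidealXX => //; apply: nideal_dvd hxy.
by rewrite -{1}(expn1 p) dvdn_exp2l.
Qed.

Lemma nideal_lift_exponent p j x y t : (0 < p)%N -> (0 < j)%N -> (0 < t)%N ->
  in_subring G x -> in_subring G y ->
  in_nideal G (p ^ j) (x - y) -> in_nideal G (p ^ (j + logn p t)) (x ^+ t - y ^+ t).
Proof.
move=> p_gt0 j_gt0 t_gt0 hx hy hxy; set k := logn p t.
have -> : t = (p ^ k * (t %/ p ^ k))%N by rewrite mulnC divnK // pfactor_dvdnn.
rewrite !exprM; apply: nidealXX; try exact: in_subringX.
clearbody k; elim: k => [|e IH]; first by rewrite addn0 expn0 !expr1.
rewrite addnS (expnSr p e) !exprM; apply: nidealXpX => //; rewrite ?addn_gt0 ?j_gt0 //.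
all: exact: in_subringX.
Qed.

End NatIdeal.

(* [qnum] and [ghost] over an arbitrary ring; on [Ring N] they coincide
   definitionally with those of Defs. *)
Definition qnumber (A : pzRingType) (h : A) (m : nat) : A := \sum_(i < m) h ^+ i.

Definition ghost_sum (A : comPzRingType) (h : A) (a : nat -> A) (n : nat) : A :=
  \sum_(d <- divisors n) (d%:R * qnumber h (n %/ d) * a d ^+ (n %/ d)).

Section QNumber.
Variable A : pzRingType.
Implicit Types (h : A) (m : nat).

Lemma qnumber0 h : qnumber h 0 = 0.
Proof. by rewrite /qnumber big_ord0. Qed.

Lemma qnumber1 h : qnumber h 1 = 1.
Proof. by rewrite /qnumber big_ord1 expr0. Qed.

Lemma qnumberD h m1 m2 : qnumber h (m1 + m2) = qnumber h m1 + h ^+ m1 * qnumber h m2.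
Proof.
rewrite /qnumber big_split_ord /= mulr_sumr.
by congr (_ + _); apply: eq_bigr => i _; rewrite exprD.
Qed.

Lemma subr1X_qnumber h p : 1 - h ^+ p = (1 - h) * qnumber h p.
Proof. by rewrite -opprB subrX1 -mulNr opprB. Qed.

Lemma in_subring_qnumber (G : A -> Prop) h m :
  in_subring G h -> in_subring G (qnumber h m).
Proof. by move=> hh; apply: in_subring_sum => i _; exact: in_subringX. Qed.

End QNumber.

Lemma qnumberM (A : comPzRingType) (h : A) p m :
  qnumber h (p * m) = qnumber h p * qnumber (h ^+ p) m.
Proof.
elim: m => [|m IH]; first by rewrite muln0 !qnumber0 mulr0.
by rewrite mulnS addnC qnumberD IH -addn1 qnumberD qnumber1 -exprM mulnC; ring.
Qed.

Lemma rmorph_qnumber (A B : pzRingType) (f : {rmorphism A -> B}) h m :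
  f (qnumber h m) = qnumber (f h) m.
Proof. by rewrite /qnumber rmorph_sum; apply: eq_bigr => i _; rewrite rmorphXn. Qed.

Section GhostSum.
Variable A : comPzRingType.
Implicit Types (h : A) (a b : nat -> A).

Lemma rmorph_ghost (B : comPzRingType) (f : {rmorphism A -> B}) h a n :
  f (ghost_sum h a n) = ghost_sum (f h) (f \o a) n.
Proof.
rewrite /ghost_sum rmorph_sum; apply: eq_bigr => d _.
by rewrite !rmorphM rmorph_nat rmorph_qnumber rmorphXn.
Qed.

Lemma ghost_sum0 h a : ghost_sum h a 0 = 0.
Proof. by rewrite /ghost_sum big1 // => d _; rewrite div0n qnumber0 mulr0 mul0r. Qed.

Lemma eq_ghost_sum h a b n :
  (forall d, (d %| n)%N -> a d = b d) -> ghost_sum h a n = ghost_sum h b n.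
Proof.
case: n => [|n] eq_ab; first by rewrite !ghost_sum0.
by apply: eq_big_seq => d; rewrite -dvdn_divisors // => /eq_ab ->.
Qed.

Lemma in_subring_ghost (G : A -> Prop) h a n : in_subring G h ->
  (forall d, (d %| n)%N -> in_subring G (a d)) -> in_subring G (ghost_sum h a n).
Proof.
move=> hh ha; case: n ha => [|n] ha; first by rewrite ghost_sum0; exact: in_subring0.
rewrite /ghost_sum big_seq; apply: in_subring_sum => d; rewrite -dvdn_divisors // => dn.
apply: sub_mul; last by apply: in_subringX; exact: ha.
by apply: sub_mul; [exact: in_subring_nat | exact: in_subring_qnumber].
Qed.

Lemma ghost_sum_top h a n : (0 < n)%N ->
  ghost_sum h a n = ghost_sum h [eta a with n |-> 0] n + n%:R * a n.
Proof.
move=> n_gt0; have n_div : n \in divisors n by rewrite -dvdn_divisors.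
rewrite /ghost_sum !(bigD1_seq n n_div (divisors_uniq n)) /= eqxx divnn n_gt0.
rewrite qnumber1 !expr1 mulr0 add0r mulr1 addrC; congr (_ + _).
by apply: eq_bigr => d /negbTE ->.
Qed.

End GhostSum.

Lemma ghost_sum_inj (D : idomainType) (h : D) (a b : nat -> D) n :
  (forall m, (0 < m)%N -> m%:R != 0 :> D) -> (0 < n)%N ->
  (forall m, (m %| n)%N -> ghost_sum h a m = ghost_sum h b m) ->
  forall m, (m %| n)%N -> a m = b m.
Proof.
move=> char0 n_gt0 eq_ab; elim/ltn_ind=> m IH m_dvd.
have m_gt0 : (0 < m)%N := dvdn_gt0 n_gt0 m_dvd.
have eq_low : ghost_sum h [eta a with m |-> 0] m = ghost_sum h [eta b with m |-> 0] m.
  apply: eq_ghost_sum => d d_dvd /=; case: eqP => // /eqP d_ne_m.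
  apply: IH; last exact: dvdn_trans d_dvd m_dvd.
  by rewrite ltn_neqAle d_ne_m dvdn_leq.
move: (eq_ab m m_dvd); rewrite ghost_sum_top // [RHS]ghost_sum_top // eq_low.
by move/addrI/(mulfI (char0 m m_gt0)).
Qed.

Section Frobenius.
Variables (A : comPzRingType) (G : A -> Prop) (psi : {rmorphism A -> A}) (p : nat).
Hypothesis p_pr : prime p.
Hypothesis psi_gen : forall r, G r -> psi r = r ^+ p.

Lemma in_subring_frob b : in_subring G b -> in_subring G (psi b).
Proof.
apply: in_subring_rmorph => r Gr.
by rewrite psi_gen //; apply: in_subringX; exact: sub_gen.
Qed.

Lemma nideal_addXp r s : in_subring G r -> in_subring G s ->
  in_nideal G p ((r + s) ^+ p - r ^+ p - s ^+ p).
Proof.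
move=> hr hs; have [p' def_p] : exists p', p = p'.+1 by exists p.-1; rewrite prednK ?prime_gt0.
rewrite def_p exprDn big_ord_recl big_ord_recr /= subn0 subnn !expr0 mulr1 mul1r.
rewrite bin0 binn !mulr1n.
have -> : forall u v w : A, u + (v + w) - u - w = v by move=> *; ring.
apply: nideal_sum => i _; apply: nideal_natmul.
  by rewrite -def_p prime_dvd_bin // def_p /bump /= add1n ltnS (leq_trans (ltn_ord i)).
by apply: sub_mul; exact: in_subringX.
Qed.

Lemma frob_congr b : in_subring G b -> in_nideal G p (psi b - b ^+ p).
Proof.
elim=> {b} [r Gr||r s hr IHr hs IHs|r hr IHr|r s hr IHr hs IHs].
- by rewrite psi_gen // subrr; exact: nideal0.
- by rewrite rmorph1 expr1n subrr; exact: nideal0.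
- have -> : psi (r + s) - (r + s) ^+ p =
      (psi r - r ^+ p) + (psi s - s ^+ p) - ((r + s) ^+ p - r ^+ p - s ^+ p).
    by rewrite rmorphD; ring.
  by apply: nidealB; [exact: nidealD | exact: nideal_addXp].
- rewrite rmorphN exprNn; have [p2|p_odd] := even_prime p_pr.
    have -> : - psi r - (-1) ^+ p * r ^+ p = - (psi r - r ^+ p) - p%:R * r ^+ p.
      by rewrite p2 expr2 mulrNN mul1r; ring.
    apply: nidealB; first exact: nidealN.
    by exists (r ^+ p) => //; exact: in_subringX.
  rewrite -signr_odd p_odd expr1 mulN1r -opprD.
  exact: nidealN.
- have -> : psi (r * s) - (r * s) ^+ p =
      (psi r - r ^+ p) * psi s + r ^+ p * (psi s - s ^+ p).
    by rewrite rmorphM exprMn; ring.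
  apply: nidealD; first by apply: nidealMr => //; exact: in_subring_frob.
  by apply: nidealMl => //; exact: in_subringX.
Qed.

Definition frob_congruent (h : A) (c : nat -> A) (n : nat) :=
  in_nideal G (p ^ logn p n) (c n - qnumber h p * psi (c (n %/ p)%N)).

Variable h : A.
Hypothesis G_h : G h.

Lemma ghost_term_frob n d x : (0 < n)%N -> (d * p %| n)%N -> in_subring G x ->
  in_nideal G (p ^ logn p n) (d%:R * qnumber h (n %/ d) * x ^+ (n %/ d)
     - qnumber h p * (d%:R * qnumber (h ^+ p) (n %/ p %/ d) * psi x ^+ (n %/ p %/ d))).
Proof.
move=> n_gt0 dp_dvd hx; have p_gt0 := prime_gt0 p_pr.
have d_gt0 : (0 < d)%N by move: (dvdn_gt0 n_gt0 dp_dvd); rewrite muln_gt0 => /andP[].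
set t := (n %/ p %/ d)%N.
have def_n : n = (d * p * t)%N by rewrite /t -divnMA [(p * d)%N]mulnC mulnC divnK.
have t_gt0 : (0 < t)%N by move: n_gt0; rewrite def_n muln_gt0 => /andP[].
have -> : (n %/ d = p * t)%N by rewrite def_n -mulnA mulKn.
rewrite qnumberM exprM.
have -> : forall u v w z : A,
    d%:R * (u * v) * w - u * (d%:R * v * z) = d%:R * (u * v * (w - z)) by move=> *; ring.
rewrite -qnumberM.
have xp_psix : in_nideal G (p ^ 1) (x ^+ p - psi x).
  by rewrite expn1 -opprB; apply: nidealN; exact: frob_congr.
have := nideal_lift_exponent p_gt0 (isT : (0 < 1)%N) t_gt0 (in_subringX p hx)
  (in_subring_frob hx) xp_psix.
move/(nidealMl (in_subring_qnumber (p * t) (sub_gen G_h)))/(nideal_natl d).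
apply: nideal_dvd; rewrite def_n lognM ?muln_gt0 ?d_gt0 ?p_gt0 // lognM //.
by rewrite (logn_prime p p_pr) eqxx -addnA !expnD dvdn_mul // pfactor_dvdnn.
Qed.

Lemma ghost_term_pcoprime n d x : (0 < n)%N -> (d %| n)%N -> ~~ (d * p %| n)%N ->
  in_subring G x -> in_nideal G (p ^ logn p n) (d%:R * qnumber h (n %/ d) * x ^+ (n %/ d)).
Proof.
move=> n_gt0 d_dvd dp_ndvd hx; have d_gt0 := dvdn_gt0 n_gt0 d_dvd.
have nd_gt0 : (0 < n %/ d)%N by rewrite divn_gt0 // dvdn_leq.
have lognd0 : logn p (n %/ d) = 0%N.
  apply/eqP; rewrite -leqn0 leqNgt logn_gt0 mem_primes p_pr nd_gt0 /=.
  by apply: contra dp_ndvd => p_dvd; rewrite -(divnK d_dvd) [(d * p)%N]mulnC dvdn_pmul2r.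
have pn_dvd : (p ^ logn p n %| d)%N.
  by rewrite -(divnK d_dvd) lognM // lognd0 pfactor_dvdnn.
apply: nideal_dvd pn_dvd _; rewrite -mulrA; exists (qnumber h (n %/ d) * x ^+ (n %/ d)) => //.
apply: sub_mul; first exact/in_subring_qnumber/sub_gen.
exact: in_subringX.
Qed.

Lemma ghost_frob_congr (a : nat -> A) n : (0 < n)%N -> (p %| n)%N ->
  (forall d, (d %| n)%N -> in_subring G (a d)) -> frob_congruent h (ghost_sum h a) n.
Proof.
move=> n_gt0 p_dvd ha; have p_gt0 := prime_gt0 p_pr.
have np_gt0 : (0 < n %/ p)%N by rewrite divn_gt0 // dvdn_leq.
have div_np : perm_eq (divisors (n %/ p)) [seq d <- divisors n | (d * p %| n)%N].
  apply: uniq_perm; rewrite ?filter_uniq ?divisors_uniq // => d.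
  rewrite mem_filter -!dvdn_divisors // dvdn_divRL //.
  by case dp_dvd: (d * p %| n)%N; rewrite // (dvdn_trans _ dp_dvd) ?dvdn_mulr.
rewrite /frob_congruent rmorph_ghost (psi_gen G_h) {2}/ghost_sum (perm_big _ div_np).
rewrite big_filter mulr_sumr /ghost_sum (bigID (fun d => d * p %| n)%N) /=.
rewrite addrAC -sumrB; apply: nidealD; rewrite big_seq_cond; apply: nideal_sum.
  move=> d /andP[]; rewrite -dvdn_divisors // => d_dvd dp_dvd.
  exact: ghost_term_frob (ha d d_dvd).
move=> d /andP[]; rewrite -dvdn_divisors // => d_dvd dp_ndvd.
exact: ghost_term_pcoprime (ha d d_dvd).
Qed.

Lemma frob_congruentD (c1 c2 : nat -> A) n : frob_congruent h c1 n ->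
  frob_congruent h c2 n -> frob_congruent h (fun m => c1 m + c2 m) n.
Proof.
rewrite /frob_congruent rmorphD mulrDr opprD addrACA.
exact: nidealD.
Qed.

Lemma frob_congruentN (c : nat -> A) n :
  frob_congruent h c n -> frob_congruent h (fun m => - c m) n.
Proof. by move/nidealN; rewrite /frob_congruent rmorphN mulrN opprK opprB addrC. Qed.

(* [psi (1 - h) = (1 - h) [p]_h] absorbs the factor [[p]_h] of the congruence. *)
Lemma frob_congruent_mul1B (c1 c2 : nat -> A) n :
  in_subring G (c1 (n %/ p)%N) -> in_subring G (c2 n) ->
  frob_congruent h c1 n -> frob_congruent h c2 n ->
  frob_congruent h (fun m => (1 - h) * c1 m * c2 m) n.
Proof.
rewrite /frob_congruent => hc1 hc2 cong1 cong2.
rewrite !rmorphM rmorphB rmorph1 (psi_gen G_h) subr1X_qnumber.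
set u := c1 n; set v := c2 n; set u' := psi (c1 _); set v' := psi (c2 _).
have -> : (1 - h) * u * v - qnumber h p * ((1 - h) * qnumber h p * u' * v') =
    (1 - h) * ((u - qnumber h p * u') * v + qnumber h p * u' * (v - qnumber h p * v')).
  by ring.
have hqp : in_subring G (qnumber h p) by exact/in_subring_qnumber/sub_gen.
apply: nidealMl; first by apply: in_subringB; [exact: sub_one | exact: sub_gen].
apply: nidealD; first exact: nidealMr.
by apply: nidealMl => //; apply: sub_mul => //; exact: in_subring_frob.
Qed.

End Frobenius.

Section Dwork.
Variables (A : comPzRingType) (G : A -> Prop) (psi : nat -> {rmorphism A -> A}).
Variables (h : A) (c : nat -> A).
Hypothesis G_h : G h.
Hypothesis psi_gen : forall p r, prime p -> G r -> psi p r = r ^+ p.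
Hypothesis c_int : forall n, (0 < n)%N -> in_subring G (c n).
Hypothesis c_congr : forall p n, prime p -> (0 < n)%N -> (p %| n)%N ->
  frob_congruent G (psi p) p h c n.

Definition ghost_solution (a : nat -> A) M :=
  forall n, (0 < n <= M)%N -> ghost_sum h a n = c n /\ in_subring G (a n).

Lemma dwork_step a M :
  ghost_solution a M -> exists b, ghost_solution [eta a with M.+1 |-> b] M.+1.
Proof.
move=> sol_a; set n := M.+1; set a0 := [eta a with n |-> 0].
have a0_int d : (d %| n)%N -> in_subring G (a0 d).
  move=> d_dvd /=; case: eqP => [_|/eqP d_ne_n]; first exact: in_subring0.
  apply: (sol_a d _).2; rewrite (dvdn_gt0 (ltn0Sn M) d_dvd) -ltnS ltn_neqAle d_ne_n.
  exact: dvdn_leq d_dvd.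
have ghost_a0 m : (0 < m <= M)%N -> ghost_sum h a0 m = c m.
  move=> m_range; rewrite -(sol_a m m_range).1; apply: eq_ghost_sum => d d_dvd /=.
  case/andP: m_range => m_gt0 m_le; case: eqP => // d_eq_n.
  by have := leq_trans (dvdn_leq m_gt0 d_dvd) m_le; rewrite d_eq_n ltnn.
have [b b_int def_b] : in_nideal G n (c n - ghost_sum h a0 n).
  apply: nideal_pfactors => //.
    by apply: in_subringB; [exact: c_int | exact: in_subring_ghost (sub_gen _) _].
  move=> p p_pr p_dvd; have p_gt1 := prime_gt1 p_pr.
  have np_range : (0 < n %/ p <= M)%N.
    by rewrite divn_gt0 ?prime_gt0 ?(dvdn_leq _ p_dvd) //= -ltnS ltn_Pdiv.
  rewrite -(subrKA (qnumber h p * psi p (c (n %/ p)%N))) -[qnumber h p * _ - _]opprB.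
  apply: nidealD; first exact: c_congr.
  apply: nidealN; rewrite -(ghost_a0 _ np_range).
  by apply: ghost_frob_congr => // r; exact: psi_gen.
exists b => m /andP[m_gt0]; rewrite leq_eqVlt => /predU1P[-> | lt_mn].
  split; last by rewrite /= eqxx.
  rewrite ghost_sum_top //= eqxx -(subrK (ghost_sum h a0 n) (c n)) def_b addrC.
  by congr (_ + _); apply: eq_ghost_sum => d _ /=; case: eqP.
have m_range : (0 < m <= M)%N by rewrite m_gt0 -ltnS.
have /negPf m_ne_n : m != n by rewrite ltn_eqF.
split; last by rewrite /= m_ne_n; exact: (sol_a m m_range).2.
rewrite -(sol_a m m_range).1; apply: eq_ghost_sum => d d_dvd /=.
case: eqP => // d_eq_n.
by have := leq_ltn_trans (dvdn_leq m_gt0 d_dvd) lt_mn; rewrite d_eq_n ltnn.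
Qed.

Lemma dwork_lemma M : exists a, ghost_solution a M.
Proof.
elim: M => [|M [a /dwork_step[b sol_b]]]; last by exists [eta a with M.+1 |-> b].
by exists (fun=> 0) => n; rewrite leqn0 andbC => /andP[/eqP->].
Qed.

End Dwork.

Section Universal.
Variable N : nat.

(* [uvar 0] plays the role of [g(q)], [ux d] of [x_d] and [uy d] of [y_d]. *)
Definition URing := {mpoly rat[N.*2.+2]}.
Definition uvar (i : nat) : URing := 'X_(inord i).
Definition ux (d : nat) := uvar d.*2.
Definition uy (d : nat) := uvar d.*2.+1.

Definition is_uvar (r : URing) := exists i, r = uvar i.
Definition is_even_uvar (r : URing) := exists2 i, ~~ odd i & r = uvar i.

Definition frobU (p : nat) : {rmorphism URing -> URing} :=
  mmap (@mpolyC _ rat) (fun i => 'X_i ^+ p).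

Lemma frobU_uvar p r : is_uvar r -> frobU p r = r ^+ p.
Proof. by move=> [i ->]; rewrite /frobU /uvar /= mmapX mmap1U. Qed.

Lemma uvar_is_uvar i : is_uvar (uvar i).
Proof. by exists i. Qed.

Lemma is_uvar_even r : is_even_uvar r -> is_uvar r.
Proof. by move=> [i _ ->]; exists i. Qed.

Lemma Ring_natr_neq0 m : (0 < m)%N -> m%:R != 0 :> Ring N.
Proof.
by move=> m_gt0; rewrite -mpolyC_nat mpolyC_eq0 -polyC_natr polyC_eq0 pnatr_eq0 -lt0n.
Qed.

Lemma in_subring_ghost_uvar (G : URing -> Prop) f m :
  G (uvar 0) -> (forall d, G (f d)) -> in_subring G (ghost_sum (uvar 0) f m).
Proof. by move=> G_h G_f; apply: in_subring_ghost => [|d _]; exact: sub_gen. Qed.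

Lemma frob_congruent_ghost_uvar (G : URing -> Prop) f p n :
  (forall r, G r -> is_uvar r) -> G (uvar 0) -> (forall d, G (f d)) ->
  prime p -> (0 < n)%N -> (p %| n)%N ->
  frob_congruent G (frobU p) p (uvar 0) (ghost_sum (uvar 0) f) n.
Proof.
move=> G_uvar G_h G_f p_pr n_gt0 p_dvd.
by apply: ghost_frob_congr => // [r /G_uvar/frobU_uvar | d _] //; exact: sub_gen.
Qed.

Variables (g : {poly int}) (n0 : nat).
Hypothesis n0_range : (0 < n0 <= N)%N.

Definition genXY (r : Ring N) :=
  r = gR N g \/ exists d : nat, (d %| n0)%N /\ (r = xv N d \/ r = yv N d).
Definition genX (r : Ring N) := r = gR N g \/ exists d : nat, (d %| n0)%N /\ r = xv N d.

(* Sending [x_d], [y_d] to [0] for [d] not dividing [n0] keeps the images of the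
   generators among those allowed at [n0]. *)
Definition eval_var (i : 'I_(N.*2.+2)) : Ring N :=
  if i == 0 :> nat then gR N g
  else if (i./2 %| n0)%N then (if odd i then yv N i./2 else xv N i./2) else 0.

Definition evalU : {rmorphism URing -> Ring N} :=
  mmap ((@mpolyC _ _) \o (@polyC rat)) eval_var.

Lemma evalU_uvar i : evalU (uvar i) = eval_var (inord i).
Proof. by rewrite /evalU /uvar /= mmapX mmap1U. Qed.

Lemma evalU_h : evalU (uvar 0) = gR N g.
Proof. by rewrite evalU_uvar /eval_var inordK. Qed.

Lemma dvd_range d : (d %| n0)%N -> (0 < d <= N)%N.
Proof.
case/andP: n0_range => n0_gt0 n0_le d_dvd.
by rewrite (dvdn_gt0 n0_gt0 d_dvd) (leq_trans (dvdn_leq n0_gt0 d_dvd)).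
Qed.

Lemma evalU_ux d : (d %| n0)%N -> evalU (ux d) = xv N d.
Proof.
move=> d_dvd; have /andP[d_gt0 d_le] := dvd_range d_dvd.
rewrite /ux evalU_uvar /eval_var inordK; last by lia.
by rewrite double_eq0 eqn0Ngt d_gt0 /= doubleK d_dvd odd_double.
Qed.

Lemma evalU_uy d : (d %| n0)%N -> evalU (uy d) = yv N d.
Proof.
move=> d_dvd; have /andP[d_gt0 d_le] := dvd_range d_dvd.
rewrite /uy evalU_uvar /eval_var inordK; last by lia.
by rewrite /= uphalf_double d_dvd odd_double.
Qed.

Lemma evalU_ghost_ux m : (m %| n0)%N ->
  evalU (ghost_sum (uvar 0) ux m) = ghost_sum (gR N g) (xv N) m.
Proof.
move=> m_dvd; rewrite rmorph_ghost evalU_h; apply: eq_ghost_sum => d d_dvd /=.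
exact/evalU_ux/(dvdn_trans d_dvd).
Qed.

Lemma evalU_ghost_uy m : (m %| n0)%N ->
  evalU (ghost_sum (uvar 0) uy m) = ghost_sum (gR N g) (yv N) m.
Proof.
move=> m_dvd; rewrite rmorph_ghost evalU_h; apply: eq_ghost_sum => d d_dvd /=.
exact/evalU_uy/(dvdn_trans d_dvd).
Qed.

Lemma evalU_genXY r : is_uvar r -> in_subring genXY (evalU r).
Proof.
move=> [i ->]; rewrite evalU_uvar /eval_var.
case: eqP => _; first by apply: sub_gen; left.
case: ifP => d_dvd; last exact: in_subring0.
apply: sub_gen; right; exists (inord i : 'I_(N.*2.+2))./2.
by split => //; case: odd; [right | left].
Qed.

Lemma evalU_genX r : is_even_uvar r -> in_subring genX (evalU r).
Proof.
move=> [i i_even ->]; rewrite evalU_uvar /eval_var.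
case: eqP => _; first by apply: sub_gen; left.
case: ifP => d_dvd; last exact: in_subring0.
have -> : odd (inord i : 'I_(N.*2.+2)) = false.
  by rewrite /inord /insubd val_insubd; case: ifP => //; rewrite (negbTE i_even).
by apply: sub_gen; right; exists (inord i : 'I_(N.*2.+2))./2.
Qed.

(* Dwork's lemma in [URing], transported to [Ring N] by [evalU]. *)
Lemma ghost_integral (G : URing -> Prop) (H : Ring N -> Prop) (c : nat -> URing)
    (T : nat -> Ring N) :
  (forall r, G r -> is_uvar r) -> G (uvar 0) ->
  (forall n, (0 < n)%N -> in_subring G (c n)) ->
  (forall p n, prime p -> (0 < n)%N -> (p %| n)%N ->
     frob_congruent G (frobU p) p (uvar 0) c n) ->
  (forall r, G r -> in_subring H (evalU r)) ->
  (forall m, (m %| n0)%N -> ghost_sum (gR N g) T m = evalU (c m)) ->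
  in_subring H (T n0).
Proof.
move=> G_uvar G_h c_int c_congr evalU_G T_ghost.
have psi_gen p r : prime p -> G r -> frobU p r = r ^+ p by move=> _ /G_uvar/frobU_uvar.
have [a sol_a] := dwork_lemma G_h psi_gen c_int c_congr N.
have /andP[n0_gt0 _] := n0_range.
have -> : T n0 = evalU (a n0).
  apply: (ghost_sum_inj (h := gR N g) (b := evalU \o a) Ring_natr_neq0 n0_gt0 _ (dvdnn n0)).
  move=> m m_dvd.
  by rewrite T_ghost // -(sol_a m (dvd_range m_dvd)).1 rmorph_ghost evalU_h.
exact: in_subring_rmorph evalU_G _ (sol_a n0 n0_range).2.
Qed.

Lemma sum_integral (S : nat -> Ring N) :
  (forall m, (0 < m <= N)%N ->
     ghost_sum (gR N g) S m = ghost_sum (gR N g) (xv N) m + ghost_sum (gR N g) (yv N) m) ->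
  in_subring genXY (S n0).
Proof.
have h_gen := uvar_is_uvar 0; have x_gen d := uvar_is_uvar d.*2.
have y_gen d := uvar_is_uvar d.*2.+1.
move=> hS; apply: (ghost_integral (G := is_uvar)
  (c := fun m => ghost_sum (uvar 0) ux m + ghost_sum (uvar 0) uy m)) => //.
- by move=> n _; apply: sub_add; apply: in_subring_ghost_uvar.
- by move=> p n *; apply: frob_congruentD; apply: frob_congruent_ghost_uvar.
- exact: evalU_genXY.
- move=> m m_dvd; rewrite (hS _ (dvd_range m_dvd)) rmorphD.
  by rewrite -(evalU_ghost_ux m_dvd) -(evalU_ghost_uy m_dvd).
Qed.

Lemma prod_integral (P : nat -> Ring N) :
  (forall m, (0 < m <= N)%N ->
     ghost_sum (gR N g) P m
     = (1 - gR N g) * ghost_sum (gR N g) (xv N) m * ghost_sum (gR N g) (yv N) m) ->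
  in_subring genXY (P n0).
Proof.
have h_gen := uvar_is_uvar 0; have x_gen d := uvar_is_uvar d.*2.
have y_gen d := uvar_is_uvar d.*2.+1.
move=> hP; apply: (ghost_integral (G := is_uvar)
  (c := fun m => (1 - uvar 0) * ghost_sum (uvar 0) ux m * ghost_sum (uvar 0) uy m)) => //.
- move=> n _; rewrite -mulrA; apply: sub_mul.
    by apply: in_subringB; [exact: sub_one | exact: sub_gen].
  by apply: sub_mul; apply: in_subring_ghost_uvar.
- move=> p n *; apply: frob_congruent_mul1B => //; first exact: frobU_uvar.
  + by apply: in_subring_ghost_uvar.
  + by apply: in_subring_ghost_uvar.
  + by apply: frob_congruent_ghost_uvar.
  + by apply: frob_congruent_ghost_uvar.
- exact: evalU_genXY.
- move=> m m_dvd; rewrite (hP _ (dvd_range m_dvd)) !rmorphM rmorphB rmorph1 evalU_h.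
  by rewrite -(evalU_ghost_ux m_dvd) -(evalU_ghost_uy m_dvd).
Qed.

Lemma inv_integral (I : nat -> Ring N) :
  (forall m, (0 < m <= N)%N ->
     ghost_sum (gR N g) (xv N) m + ghost_sum (gR N g) I m = 0) ->
  in_subring genX (I n0).
Proof.
have h_gen : is_even_uvar (uvar 0) by exists 0%N.
have x_gen d : is_even_uvar (ux d) by exists d.*2; rewrite ?odd_double.
move=> hI; apply: (ghost_integral (G := is_even_uvar)
  (c := fun m => - ghost_sum (uvar 0) ux m)) => //.
- exact: is_uvar_even.
- by move=> n _; apply: sub_opp; apply: in_subring_ghost_uvar.
- move=> p n *; apply: frob_congruentN.
  by apply: frob_congruent_ghost_uvar => //; exact: is_uvar_even.
- exact: evalU_genX.
- move=> m m_dvd; have := hI m (dvd_range m_dvd).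
  by rewrite -(evalU_ghost_ux m_dvd) rmorphN => hIm; apply/eqP; rewrite -addr_eq0 addrC hIm.
Qed.

End Universal.

Theorem lemma3p3 (g : {poly int}) (N : nat) (S P I : nat -> Ring N) :
  (forall n : nat, (0 < n <= N)%N ->
     ghost (gR N g) S n = ghost (gR N g) (xv N) n + ghost (gR N g) (yv N) n) ->
  (forall n : nat, (0 < n <= N)%N ->
     ghost (gR N g) P n
     = (1 - gR N g) * ghost (gR N g) (xv N) n * ghost (gR N g) (yv N) n) ->
  (forall n : nat, (0 < n <= N)%N ->
     ghost (gR N g) (xv N) n + ghost (gR N g) I n = 0) ->
  forall n : nat, (0 < n <= N)%N ->
    [/\ in_subring (fun r => r = gR N g \/
                      exists d : nat, (d %| n)%N /\ (r = xv N d \/ r = yv N d)) (S n),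
        in_subring (fun r => r = gR N g \/
                      exists d : nat, (d %| n)%N /\ (r = xv N d \/ r = yv N d)) (P n)
      & in_subring (fun r => r = gR N g \/
                      exists d : nat, (d %| n)%N /\ r = xv N d) (I n)].
Proof.
move=> hS hP hI n n_range.
by split; [exact: sum_integral | exact: prod_integral | exact: inv_integral].
Qed.
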